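(* Let $G$ be a (claw, bull)-free graph, let $C$ be an induced cycle of $G$ of length $k\ge 4$, and let $x\in N(C)$. Then $N(x)$ contains two consecutive vertices of $C$. Moreover, if $k\ge 5$, then $N(x)$ contains three consecutive vertices of $C$.
   Context: A claw is a graph isomorphic to $K_{1,3}$; a bull is the graph obtained from a triangle by adding two pendant edges at two different vertices. A graph is (claw, bull)-free if it has no induced claw and no induced bull. For a set $X$ of vertices, $N(X)=\big(\bigcup_{x\in X}N(x)\big)\setminus X$ is its open neighborhood; $N(C)$ means $N(V(C))$. *)

From mathcomp Require Import all_boot.
Set Implicit Arguments. Unset Strict Implicit. Unset Printing Implicit Defensive.

Definition simple_graph (T : finType) (e : rel T) : Prop :=
  symmetric e /\ irreflexive e.

Definition induced_claw (T : finType) (e : rel T) (a b c d : T) : Prop :=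
  uniq [:: a; b; c; d] /\ e a b /\ e a c /\ e a d /\
  ~~ e b c /\ ~~ e b d /\ ~~ e c d.

(* Induced bull: triangle a b c, pendant d at a, pendant f at b. *)
Definition induced_bull (T : finType) (e : rel T) (a b c d f : T) : Prop :=
  uniq [:: a; b; c; d; f] /\ e a b /\ e b c /\ e a c /\ e a d /\ e b f /\
  ~~ e b d /\ ~~ e c d /\ ~~ e a f /\ ~~ e c f /\ ~~ e d f.

Definition claw_free (T : finType) (e : rel T) : Prop :=
  forall a b c d, ~ induced_claw e a b c d.

Definition bull_free (T : finType) (e : rel T) : Prop :=
  forall a b c d f, ~ induced_bull e a b c d f.

Definition cyc_succ (k : nat) (i : nat) : nat := i.+1 %% k.

Definition induced_cycle (T : finType) (e : rel T) (k : nat)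
    (c : 'I_k -> T) : Prop :=
  injective c /\
  forall i j : 'I_k,
    e (c i) (c j) = (val j == cyc_succ k i) || (val i == cyc_succ k j).

Definition in_cycle_nbhd (T : finType) (e : rel T) (k : nat)
    (c : 'I_k -> T) (x : T) : Prop :=
  (forall i, x != c i) /\ exists i, e x (c i).

From mathcomp Require Import all_boot.

Set Implicit Arguments.
Unset Strict Implicit.
Unset Printing Implicit Defensive.

(* If x sees a vertex v of C but neither of its neighbours on C, then v is the
   centre of a claw with leaves x and these two neighbours, which are
   non-adjacent since k >= 4; so x sees an edge of C.  If k >= 5 and x sees the
   edge v1 v2 of a path v0 v1 v2 v3 of C but neither v0 nor v3, then the
   triangle x v1 v2 with pendant vertices v0 at v1 and v3 at v2 is a bull. *)

Lemma val_iter_ordS (k : nat) (i : 'I_k) (m : nat) :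
  val (iter m (@ordS k) i) = (i + m) %% k.
Proof.
elim: m => [|m IHm] /=; first by rewrite addn0 modn_small.
by rewrite IHm -addn1 modnDml addn1 addnS.
Qed.

Section InducedCycle.

Variables (T : finType) (e : rel T) (k : nat) (c : 'I_k -> T).
Hypothesis c_cycle : induced_cycle e c.

Lemma induced_cycle_vertex_eq (i : 'I_k) (a b : nat) : a < k -> b < k ->
  (c (iter a (@ordS k) i) == c (iter b (@ordS k) i)) = (a == b).
Proof.
case: c_cycle => c_inj _ ak bk.
by rewrite (inj_eq c_inj) -val_eqE /= !val_iter_ordS eqn_modDl !modn_small.
Qed.

Lemma induced_cycle_adj (i : 'I_k) (a b : nat) : a.+1 < k -> b.+1 < k ->
  e (c (iter a (@ordS k) i)) (c (iter b (@ordS k) i)) =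
  (b == a.+1) || (a == b.+1).
Proof.
case: c_cycle => _ c_adj ak bk.
have succE m : cyc_succ k (val (iter m (@ordS k) i)) = (i + m.+1) %% k.
  by rewrite /cyc_succ val_iter_ordS -addn1 modnDml addn1 addnS.
have [ak' bk'] := (ltnW ak, ltnW bk).
by rewrite c_adj !succE !val_iter_ordS !eqn_modDl !modn_small.
Qed.

Variable x : T.
Hypothesis e_sym : symmetric e.
Hypothesis x_off_cycle : forall i, x != c i.

Let v (i : 'I_k) (m : nat) : T := c (iter m (@ordS k) i).

Lemma claw_free_cycle_nbr : claw_free e -> 3 < k -> forall i : 'I_k,
  e x (v i 1) -> e x (v i 0) || e x (v i 2).
Proof.
move=> clawF k4 i x1; apply/negPn/negP; rewrite negb_or => /andP [x0 x2].
apply: (clawF (v i 1) x (v i 0) (v i 2)); rewrite /v.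
have ltk m : m < 4 -> m < k by move=> m4; exact: leq_trans m4 k4.
rewrite /induced_claw !cons_uniq !in_cons in_nil !negb_or.
rewrite !induced_cycle_vertex_eq ?ltk // !(eq_sym _ x) !x_off_cycle.
by rewrite e_sym x1 x0 x2 !induced_cycle_adj ?ltk.
Qed.

Lemma bull_free_cycle_nbr : bull_free e -> 4 < k -> forall i : 'I_k,
  e x (v i 1) -> e x (v i 2) -> e x (v i 0) || e x (v i 3).
Proof.
move=> bullF k5 i x1 x2; apply/negPn/negP; rewrite negb_or => /andP [x0 x3].
apply: (bullF (v i 1) (v i 2) x (v i 0) (v i 3)); rewrite /v.
have ltk m : m < 5 -> m < k by move=> m5; exact: leq_trans m5 k5.
rewrite /induced_bull !cons_uniq !in_cons in_nil !negb_or.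
rewrite !induced_cycle_vertex_eq ?ltk // !(eq_sym _ x) !x_off_cycle.
by rewrite !(e_sym _ x) x0 x1 x2 x3 !induced_cycle_adj ?ltk.
Qed.

End InducedCycle.

Theorem lemma2 (T : finType) (e : rel T) (k : nat) (c : 'I_k -> T) (x : T) :
  simple_graph e -> claw_free e -> bull_free e ->
  4 <= k -> induced_cycle e c -> in_cycle_nbhd e c x ->
  (exists i j : 'I_k, val j = cyc_succ k i /\ e x (c i) /\ e x (c j)) /\
  (5 <= k ->
   exists i j l : 'I_k, val j = cyc_succ k i /\ val l = cyc_succ k j /\
     e x (c i) /\ e x (c j) /\ e x (c l)).
Proof.
move=> [e_sym _] clawF bullF k4 c_cycle [x_off [j0 xj0]].
have edge : exists i : 'I_k, e x (c i) /\ e x (c (ordS i)).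
  move: xj0; rewrite -(ord_predK j0); move: (ord_pred j0) => i xi1.
  case/orP: (claw_free_cycle_nbr c_cycle e_sym x_off clawF k4 xi1) => xi.
    by exists i.
  by exists (ordS i).
split; first by case: edge => i [xi xSi]; exists i, (ordS i).
move=> k5; case: edge => j [xj xSj].
move: xj xSj; rewrite -(ord_predK j); move: (ord_pred j) => i xi1 xi2.
case/orP: (bull_free_cycle_nbr c_cycle e_sym x_off bullF k5 xi1 xi2) => xi.
  by exists i, (ordS i), (ordS (ordS i)).
by exists (ordS i), (ordS (ordS i)), (ordS (ordS (ordS i))).
Qed.
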